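(* Let $f:[0,1]\to\mathbb{R}$ with $f(0),f(1)\in\mathbb{Z}$, and let $n\in\mathbb{N}_+$, $n\ge 3$. Set \[ \psi_n(x):=(n+1)\int_0^1 t(1-t)^{n(1-x)+1}\frac{(1-t)^{nx-1}-t^{nx-1}}{1-2t}\,dt,\quad x\in[0,1]. \] If $f(x)+\psi_n(x)$ is monotone decreasing on $[0,1]$, then $\widetilde{B}_n(f)$ is monotone decreasing on $[0,1]$.
   Context: For $n\in\mathbb{N}_+$ and $f:[0,1]\to\mathbb{R}$, $\widetilde{B}_n(f)(x):=\sum_{k=0}^n \left[f\left(\frac{k}{n}\right)\binom{n}{k}\right]x^k(1-x)^{n-k}$, where $[\alpha]$ is the largest integer $\le\alpha$. Monotone decreasing is meant in the non-strict sense. *)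

From Stdlib Require Import Reals.
From Coquelicot Require Import Coquelicot.
Open Scope R_scope.

Definition floorR (a : R) : R := IZR (Int_part a).

Definition Btilde (n : nat) (f : R -> R) (x : R) : R :=
  sum_f_R0 (fun k => floorR (f (INR k / INR n) * Binomial.C n k)
                     * x ^ k * (1 - x) ^ (n - k)) n.

(* psi_n(x) = (n+1) int_0^1 t (1-t)^{n(1-x)+1}
                 ((1-t)^{nx-1} - t^{nx-1}) / (1-2t) dt
   (real powers of positive bases via Rpower; the integrand is bounded on
   (0,1) with a removable singularity at t = 1/2, so the values at the
   finitely many points t = 0, 1/2, 1 do not affect the Riemann integral) *)
Definition psi (n : nat) (x : R) : R :=
  (INR n + 1) *
  RInt (fun t => t * Rpower (1 - t) (INR n * (1 - x) + 1)
                 * (Rpower (1 - t) (INR n * x - 1) - Rpower t (INR n * x - 1))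
                 / (1 - 2 * t)) 0 1.

Definition decreasing_on_01 (g : R -> R) : Prop :=
  forall x y, 0 <= x -> x <= y -> y <= 1 -> g y <= g x.

From Stdlib Require Import Reals Lra Lia.
From Coquelicot Require Import Coquelicot.
Open Scope R_scope.

(* Btilde_n f is the Bernstein polynomial of the coefficients
   b_k = [f(k/n) C(n,k)] / C(n,k), and a Bernstein polynomial with decreasing
   coefficients is decreasing.  On the grid k/n the integrand of psi_n grows by
   t^k (1-t)^(n-k) from one node to the next, so
   psi_n((k+1)/n) - psi_n(k/n) = (n+1) B(k+1, n-k+1) = 1/C(n,k).  As the floor
   loses less than 1/C(n,k), monotonicity of f + psi_n gives
   b_(k+1) <= f((k+1)/n) <= f(k/n) - 1/C(n,k) < b_k. *)

Definition bernstein (n : nat) (b : nat -> R) (x : R) : R :=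
  sum_f_R0 (fun k => b k * Binomial.C n k * x ^ k * (1 - x) ^ (n - k)) n.

Lemma bernstein_0 (b : nat -> R) (x : R) : bernstein 0 b x = b 0%nat.
Proof. unfold bernstein; simpl; rewrite C_n_0; ring. Qed.

Lemma bernstein_S (n : nat) (b : nat -> R) (x : R) :
  bernstein (S n) b x = (1 - x) * bernstein n b x + x * bernstein n (fun k => b (S k)) x.
Proof.
  unfold bernstein; destruct n as [|m].
  { simpl; rewrite !C_n_0, C_n_n; ring. }
  set (T := fun n (b : nat -> R) k => b k * Binomial.C n k * x ^ k * (1 - x) ^ (n - k)).
  change (sum_f_R0 (T (S (S m)) b) (S (S m)) =
    (1 - x) * sum_f_R0 (T (S m) b) (S m) + x * sum_f_R0 (T (S m) (fun k => b (S k))) (S m)).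
  assert (pascal_T : forall i, (i <= m)%nat ->
    T (S (S m)) b (S i) = T (S m) b (S i) * (1 - x) + T (S m) (fun k => b (S k)) i * x).
  { intros i Hi; unfold T.
    rewrite <- pascal by lia.
    replace (S (S m) - S i)%nat with (S (S m - S i)) by lia.
    replace (S m - i)%nat with (S (S m - S i)) by lia.
    simpl; ring. }
  rewrite (decomp_sum _ (S (S m))), (decomp_sum (T (S m) b) (S m)) by lia; simpl pred.
  rewrite tech5, (tech5 (T (S m) (fun k => b (S k))) m).
  rewrite (sum_eq _ _ _ pascal_T), sum_plus, <- !scal_sum.
  unfold T; rewrite !C_n_0, !C_n_n, !Nat.sub_diag, !Nat.sub_0_r; simpl; ring.
Qed.

Lemma bernstein_le_coef (n : nat) :
  forall (b b' : nat -> R) (x : R), (forall k, (k <= n)%nat -> b k <= b' k) ->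
  0 <= x <= 1 -> bernstein n b x <= bernstein n b' x.
Proof.
  induction n as [|m IH]; intros b b' x Hb Hx.
  - rewrite !bernstein_0; apply Hb; lia.
  - rewrite !bernstein_S.
    assert (H0 := IH b b' x ltac:(intros k Hk; apply Hb; lia) Hx).
    assert (H1 := IH (fun k => b (S k)) (fun k => b' (S k)) x
                    ltac:(intros k Hk; apply Hb; lia) Hx).
    nra.
Qed.

Lemma bernstein_decreasing (n : nat) :
  forall b : nat -> R, (forall k, (k < n)%nat -> b (S k) <= b k) ->
  decreasing_on_01 (bernstein n b).
Proof.
  induction n as [|m IH]; intros b Hb x y Hx Hxy Hy.
  - rewrite !bernstein_0; lra.
  - rewrite !bernstein_S.
    set (b1 := fun k => b (S k)).
    assert (dec_b : bernstein m b y <= bernstein m b x)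
      by (apply IH; auto; intros k Hk; apply Hb; lia).
    assert (dec_b1 : bernstein m b1 y <= bernstein m b1 x)
      by (apply IH; auto; intros k Hk; apply Hb; lia).
    assert (shift_le : bernstein m b1 x <= bernstein m b x)
      by (apply bernstein_le_coef; [intros k Hk; apply Hb; lia | lra]).
    nra.
Qed.

Definition beta_nat (a b : nat) : R :=
  INR (Factorial.fact a) * INR (Factorial.fact b) / INR (Factorial.fact (a + b + 1)).

Lemma beta_nat_0_r (a : nat) : beta_nat a 0 = / INR (S a).
Proof.
  unfold beta_nat; rewrite Nat.add_0_r, Nat.add_1_r.
  change (Factorial.fact (S a)) with (S a * Factorial.fact a)%nat; rewrite mult_INR.
  rewrite S_INR; pose proof (INR_fact_neq_0 a); pose proof (pos_INR a).
  simpl (INR (Factorial.fact 0)); field; split; [lra | auto].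
Qed.

Lemma beta_nat_S_r (a b : nat) : beta_nat a (S b) = beta_nat a b - beta_nat (S a) b.
Proof.
  unfold beta_nat.
  replace (a + S b + 1)%nat with (S (a + b + 1)) by lia.
  replace (S a + b + 1)%nat with (S (a + b + 1)) by lia.
  change (Factorial.fact (S ?m)) with (S m * Factorial.fact m)%nat.
  rewrite !mult_INR, !S_INR, !plus_INR.
  pose proof (INR_fact_neq_0 a); pose proof (INR_fact_neq_0 b).
  pose proof (INR_fact_neq_0 (a + b + 1)); pose proof (pos_INR a); pose proof (pos_INR b).
  change (INR 1) with 1; field; split; [auto | lra].
Qed.

Lemma is_RInt_beta_nat (a b : nat) :
  is_RInt (fun t => t ^ a * (1 - t) ^ b) 0 1 (beta_nat a b).
Proof.
  revert a; induction b as [|b IH]; intros a.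
  - replace (beta_nat a 0) with (1 ^ S a / INR (S a) - 0 ^ S a / INR (S a)).
    + apply (is_RInt_ext (V := R_NormedModule) (fun t => t ^ a));
        [intros t _; simpl; ring | apply is_RInt_pow].
    + rewrite beta_nat_0_r, pow1, pow_i by lia; field; apply not_0_INR; lia.
  - rewrite beta_nat_S_r.
    apply (is_RInt_ext (V := R_NormedModule)
             (fun t => t ^ a * (1 - t) ^ b - t ^ S a * (1 - t) ^ b));
      [intros t _; simpl; ring |].
    apply (is_RInt_minus (V := R_NormedModule)); apply IH.
Qed.

Lemma is_RInt_ext_off_point (f g : R -> R) (a c b l : R) : a < c < b ->
  (forall t, a < t < b -> t <> c -> f t = g t) -> is_RInt f a b l -> is_RInt g a b l.
Proof.
  intros Hc Hfg Hf.
  assert (Ef : ex_RInt f a b) by (exists l; exact Hf).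
  assert (E1 : ex_RInt f a c) by (apply (ex_RInt_Chasles_1 f a c b); [lra | exact Ef]).
  assert (E2 : ex_RInt f c b) by (apply (ex_RInt_Chasles_2 f a c b); [lra | exact Ef]).
  assert (H1 : is_RInt g a c (RInt f a c)).
  { apply (is_RInt_ext f); [| exact (RInt_correct _ _ _ E1)].
    rewrite Rmin_left, Rmax_right by lra; intros t Ht; apply Hfg; lra. }
  assert (H2 : is_RInt g c b (RInt f c b)).
  { apply (is_RInt_ext f); [| exact (RInt_correct _ _ _ E2)].
    rewrite Rmin_left, Rmax_right by lra; intros t Ht; apply Hfg; lra. }
  replace l with (plus (RInt f a c) (RInt f c b)).
  - exact (is_RInt_Chasles g a c b _ _ H1 H2).
  - rewrite RInt_Chasles by assumption; exact (is_RInt_unique f a b l Hf).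
Qed.

Definition psi_integrand (n : nat) (x t : R) : R :=
  t * Rpower (1 - t) (INR n * (1 - x) + 1)
    * (Rpower (1 - t) (INR n * x - 1) - Rpower t (INR n * x - 1)) / (1 - 2 * t).

Lemma Rpower_INR_pred (t : R) (k : nat) : 0 < t -> Rpower t (INR k - 1) = t ^ k / t.
Proof.
  intros Ht.
  rewrite <- (Rpower_pow k t Ht).
  replace (INR k) with (INR k - 1 + 1) at 2 by ring.
  rewrite Rpower_plus, Rpower_1 by exact Ht.
  field; lra.
Qed.

Lemma psi_integrand_grid (n k : nat) (t : R) : (0 < n)%nat -> (k <= n)%nat -> 0 < t < 1 ->
  psi_integrand n (INR k / INR n) t
  = (1 - t) ^ (n - k) * (t * (1 - t) ^ k - (1 - t) * t ^ k) / (1 - 2 * t).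
Proof.
  intros Hn Hk Ht.
  assert (Hn0 : INR n <> 0) by (apply not_0_INR; lia).
  unfold psi_integrand.
  replace (INR n * (INR k / INR n)) with (INR k) by (field; exact Hn0).
  replace (INR n * (1 - INR k / INR n) + 1) with (INR (n - k) + 1)
    by (rewrite minus_INR by exact Hk; field; exact Hn0).
  rewrite Rpower_plus, Rpower_pow, Rpower_1, !Rpower_INR_pred by lra.
  (* t = 1/2 is not excluded, so the division by 1 - 2 t must stay out of [field] *)
  unfold Rdiv; f_equal; field; lra.
Qed.

Lemma psi_integrand_grid_0 (n : nat) (t : R) : (0 < n)%nat -> 0 < t < 1 -> t <> 1 / 2 ->
  psi_integrand n (INR 0 / INR n) t = - (1 - t) ^ n.
Proof.
  intros Hn Ht Ht2.
  assert (1 - 2 * t <> 0) by (intro; apply Ht2; lra).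
  rewrite psi_integrand_grid by (lia || lra).
  rewrite Nat.sub_0_r; simpl; field; assumption.
Qed.

Lemma psi_integrand_grid_S (n k : nat) (t : R) :
  (S k <= n)%nat -> 0 < t < 1 -> t <> 1 / 2 ->
  psi_integrand n (INR (S k) / INR n) t
  = psi_integrand n (INR k / INR n) t + t ^ k * (1 - t) ^ (n - k).
Proof.
  intros Hk Ht Ht2.
  assert (1 - 2 * t <> 0) by (intro; apply Ht2; lra).
  rewrite !psi_integrand_grid by (lia || lra).
  replace (n - k)%nat with (S (n - S k)) by lia.
  simpl; field; assumption.
Qed.

Lemma is_RInt_psi_integrand_grid_S (n k : nat) : (S k <= n)%nat ->
  ex_RInt (psi_integrand n (INR k / INR n)) 0 1 ->
  is_RInt (psi_integrand n (INR (S k) / INR n)) 0 1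
    (RInt (psi_integrand n (INR k / INR n)) 0 1 + beta_nat k (n - k)).
Proof.
  intros Hk E.
  apply (is_RInt_ext_off_point
           (fun t => psi_integrand n (INR k / INR n) t + t ^ k * (1 - t) ^ (n - k))
           _ 0 (1 / 2) 1);
    [lra | intros t Ht Ht2; symmetry; apply psi_integrand_grid_S; assumption |].
  exact (is_RInt_plus _ _ _ _ _ _ (RInt_correct _ _ _ E) (is_RInt_beta_nat k (n - k))).
Qed.

Lemma ex_RInt_psi_integrand_grid (n k : nat) : (0 < n)%nat -> (k <= n)%nat ->
  ex_RInt (psi_integrand n (INR k / INR n)) 0 1.
Proof.
  intros Hn; induction k as [|k IH]; intros Hk.
  - exists (- beta_nat 0 n).
    apply (is_RInt_ext_off_point (fun t => - (t ^ 0 * (1 - t) ^ n)) _ 0 (1 / 2) 1);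
      [lra | intros t Ht Ht2; rewrite psi_integrand_grid_0 by assumption; simpl; ring |].
    apply (is_RInt_opp (V := R_NormedModule)), is_RInt_beta_nat.
  - eexists; apply is_RInt_psi_integrand_grid_S, IH; lia.
Qed.

Lemma beta_nat_binomial (n k : nat) : (k <= n)%nat ->
  (INR n + 1) * beta_nat k (n - k) = / Binomial.C n k.
Proof.
  intros Hk; unfold beta_nat, Binomial.C.
  replace (k + (n - k) + 1)%nat with (S n) by lia.
  change (Factorial.fact (S n)) with (S n * Factorial.fact n)%nat.
  rewrite mult_INR, S_INR.
  pose proof (INR_fact_neq_0 n); pose proof (INR_fact_neq_0 k).
  pose proof (INR_fact_neq_0 (n - k)); pose proof (pos_INR n).
  field; repeat split; auto; lra.
Qed.

Lemma psi_grid_S_sub (n k : nat) : (S k <= n)%nat ->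
  psi n (INR (S k) / INR n) - psi n (INR k / INR n) = / Binomial.C n k.
Proof.
  intros Hk.
  change (psi n ?x) with ((INR n + 1) * RInt (psi_integrand n x) 0 1).
  rewrite (is_RInt_unique _ _ _ _ (is_RInt_psi_integrand_grid_S n k Hk
             (ex_RInt_psi_integrand_grid n k ltac:(lia) ltac:(lia)))).
  rewrite <- beta_nat_binomial by lia; ring.
Qed.

Lemma Binomial_C_pos (n k : nat) : 0 < Binomial.C n k.
Proof.
  unfold Binomial.C; apply Rdiv_lt_0_compat; [apply INR_fact_lt_0 |].
  apply Rmult_lt_0_compat; apply INR_fact_lt_0.
Qed.

Lemma floorR_mul_div_le (a c : R) : 0 < c -> floorR (a * c) / c <= a.
Proof.
  intros Hc; destruct (base_Int_part (a * c)) as [Hle _]; unfold floorR.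
  apply Rmult_le_reg_r with c; [exact Hc |].
  unfold Rdiv; rewrite Rmult_assoc, Rinv_l by lra; lra.
Qed.

Lemma floorR_mul_div_gt (a c : R) : 0 < c -> a - / c < floorR (a * c) / c.
Proof.
  intros Hc; destruct (base_Int_part (a * c)) as [_ Hgt]; unfold floorR.
  apply Rmult_lt_reg_r with c; [exact Hc |].
  unfold Rdiv; rewrite Rmult_minus_distr_r, !Rmult_assoc, !Rinv_l by lra; lra.
Qed.

Definition btilde_coef (n : nat) (f : R -> R) (k : nat) : R :=
  floorR (f (INR k / INR n) * Binomial.C n k) / Binomial.C n k.

Lemma Btilde_bernstein (n : nat) (f : R -> R) (x : R) :
  Btilde n f x = bernstein n (btilde_coef n f) x.
Proof.
  apply sum_eq; intros k _; unfold btilde_coef.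
  pose proof (Binomial_C_pos n k); field; lra.
Qed.

Lemma btilde_coef_S_le (n : nat) (f : R -> R) (k : nat) : (k < n)%nat ->
  decreasing_on_01 (fun x => f x + psi n x) ->
  btilde_coef n f (S k) <= btilde_coef n f k.
Proof.
  intros Hk Hdec.
  assert (Hn : 0 < INR n) by (apply lt_0_INR; lia).
  assert (Hx : 0 <= INR k / INR n) by (apply Rdiv_le_0_compat; [apply pos_INR | exact Hn]).
  assert (Hxy : INR k / INR n <= INR (S k) / INR n)
    by (apply Rmult_le_compat_r; [left; apply Rinv_0_lt_compat, Hn | rewrite S_INR; lra]).
  assert (Hy : INR (S k) / INR n <= 1)
    by (apply Rmult_le_reg_r with (INR n); [exact Hn |];
        unfold Rdiv; rewrite Rmult_assoc, Rinv_l, Rmult_1_l, Rmult_1_r by lra;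
        apply le_INR; lia).
  pose proof (Hdec _ _ Hx Hxy Hy) as Hstep; cbv beta in Hstep.
  pose proof (psi_grid_S_sub n k Hk) as psi_step.
  pose proof (floorR_mul_div_le (f (INR (S k) / INR n)) _ (Binomial_C_pos n (S k))) as coef_S.
  pose proof (floorR_mul_div_gt (f (INR k / INR n)) _ (Binomial_C_pos n k)) as coef_k.
  unfold btilde_coef; lra.
Qed.

Theorem corollary2p7 (f : R -> R) (n : nat) :
  (3 <= n)%nat ->
  (exists z0 : Z, f 0 = IZR z0) ->
  (exists z1 : Z, f 1 = IZR z1) ->
  decreasing_on_01 (fun x => f x + psi n x) ->
  decreasing_on_01 (Btilde n f).
Proof.
  intros _ _ _ Hdec x y Hx Hxy Hy.
  rewrite !Btilde_bernstein.
  apply bernstein_decreasing; auto.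
  intros k Hk; apply btilde_coef_S_le; assumption.
Qed.
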